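(* Let $g(n) = \frac{(\log n)^2}{n} f(n)$ and \[ M = \limsup_{t\to\infty} \max_{1 \le s \le t} \frac{\log(R(s,t))}{\sqrt{st}}. \] Then $\limsup_{n\to\infty} g(n) \le M^2$.
   Context: All logarithms are in base 2. For positive integers $s,t$, the Ramsey number $R(s,t)$ is the minimum $n$ such that every red/blue edge-coloring of the complete graph $K_n$ contains a red clique on $s$ vertices or a blue clique on $t$ vertices. For a graph $G$, $\chi(G)$ is its chromatic number and $\omega(G)$ its clique number. For $n \in \mathbb{N}$, $f(n)$ is the maximum of $\chi(G)/\omega(G)$ over all graphs $G$ on $n$ vertices. *)

From HB Require Import structures.
From mathcomp Require Import all_boot all_order all_algebra.
From mathcomp Require Import all_classical all_reals all_analysis.
Set Implicit Arguments. Unset Strict Implicit. Unset Printing Implicit Defensive.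
Import Order.TTheory GRing.Theory Num.Theory.

Definition graph (n : nat) := {ffun 'I_n -> {ffun 'I_n -> bool}}.

Definition simple_graph n (G : graph n) : bool :=
  [forall x, ~~ G x x] && [forall x, forall y, G x y == G y x].

Definition is_clique n (G : graph n) (A : {set 'I_n}) : bool :=
  [forall x in A, forall y in A, (x != y) ==> G x y].

Definition clique_number n (G : graph n) : nat :=
  \max_(A : {set 'I_n} | is_clique G A) #|A|.

Definition proper_coloring n k (G : graph n) (c : {ffun 'I_n -> 'I_k}) : bool :=
  [forall x, forall y, G x y ==> (c x != c y)].

(* chromatic number chi(G): least k admitting a proper k-colouring
   (k = n always works, so the minimum is over k <= n). *)
Definition chromatic_number n (G : graph n) : nat :=
  \big[minn/n]_(k < n.+1 | [exists c : {ffun 'I_n -> 'I_k}, proper_coloring G c]) k.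

Local Open Scope ring_scope.

Definition f_ratio (R : realType) (n : nat) : R :=
  \big[Num.max/0]_(G : graph n | simple_graph G)
     ((chromatic_number G)%:R / (clique_number G)%:R).

Definition log2 (R : realType) (x : R) : R := ln x / ln 2.

Definition g_fun (R : realType) (n : nat) : R :=
  (log2 (n%:R : R)) ^+ 2 / n%:R * f_ratio R n.

Local Close Scope ring_scope.

(* Every red/blue colouring of the edges of K_n (a symmetric boolean matrix:
   true = red, false = blue) has a red K_s or a blue K_t. *)
Definition ramsey_prop (s t n : nat) : Prop :=
  forall c : {ffun 'I_n -> {ffun 'I_n -> bool}},
    (forall x y, c x y = c y x) ->
    (exists A : {set 'I_n}, #|A| = s /\
        forall x y, x \in A -> y \in A -> x != y -> c x y) \/
    (exists A : {set 'I_n}, #|A| = t /\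
        forall x y, x \in A -> y \in A -> x != y -> ~~ c x y).

Definition is_ramsey_number (s t r : nat) : Prop :=
  ramsey_prop s t r /\ forall n, ramsey_prop s t n -> (r <= n)%N.

(* Greedy colouring: if every set of at least m vertices of G contains an
   independent set of size t, then removing such sets one at a time gives
   chi(G) <= m + n/t.  Fix a > M and a small eta > 0, let L = (log n)^2 and
   k = omega(G), and choose (m, t) according to the size of k:
   - k bounded: Erdos-Szekeres with t ~ n^(theta/K) gives m = t^k <= n^theta;
   - K <= k <= eta L / a^2: t ~ theta^2 L / (a^2 (k+1)), for which the
     hypothesis log R(k+1, t) <= a sqrt((k+1) t) <= theta log n gives
     m = R(k+1, t) <= n^theta;
   - eta L / a^2 < k < L / a^2: t = K + 1 and Erdos-Szekeres give
     m = (k+1)^K <= n^theta;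
   - k >= L / a^2: chi(G) <= n.
   Since theta < 1, in every case chi(G) <= (1 + 12 eta) a^2 k n / L for n
   large, i.e. g(n) <= (1 + 12 eta) a^2; then let a -> M and eta -> 0. *)

From mathcomp Require Import all_boot all_order all_algebra.
From mathcomp Require Import zify.
Import Order.TTheory GRing.Theory Num.Theory.
Set Implicit Arguments. Unset Strict Implicit. Unset Printing Implicit Defensive.

(** * Homogeneous sets and greedy colouring *)

Lemma ramsey_prop_sym s t r : ramsey_prop s t r -> ramsey_prop t s r.
Proof.
move=> Hst c c_sym; pose c' := [ffun x => [ffun y => ~~ c x y]].
have c'_sym x y : c' x y = c' y x by rewrite !ffunE c_sym.
case: (Hst c' c'_sym) => [[A [cardA HA]]|[A [cardA HA]]]; [right|left];
  exists A; split => // x y xA yA xy; have := HA x y xA yA xy; by rewrite !ffunE ?negbK.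
Qed.

Lemma bin_leq_expn s t : 'C(s + t, s) <= t.+1 ^ s.
Proof.
elim: s => [|s IHs]; first by rewrite bin0.
have binE := mul_bin_diag (s.+1 + t) s; rewrite addSn /= in binE.
rewrite -(leq_pmul2l (ltn0Sn s)) addSn -binE expnS mulnA mulnC [leqRHS]mulnC.
apply: leq_mul IHs _; nia.
Qed.

Lemma chromatic_number_leq_n n (G : graph n) : chromatic_number G <= n.
Proof. by rewrite /chromatic_number -minEnat -leEnat bigmin_le_id. Qed.

Lemma chromatic_number_leq n (G : graph n) k (c : {ffun 'I_n -> 'I_k}) :
  proper_coloring G c -> chromatic_number G <= k.
Proof.
move=> c_proper; have [kn|nk] := leqP k n; last first.
  exact: leq_trans (chromatic_number_leq_n G) (ltnW nk).
rewrite /chromatic_number -minEnat -leEnat.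
apply: (bigmin_inf (Ordinal (kn : k < n.+1))) => //.
by apply/existsP; exists c.
Qed.

Section Homogeneous.
Variables (n : nat) (G : graph n).
Hypothesis G_simple : simple_graph G.
Implicit Types (A B I : {set 'I_n}) (x y v : 'I_n) (m t : nat).

Lemma graph_irrefl x : G x x = false.
Proof. by case/andP: G_simple => /forallP /(_ x) /negbTE. Qed.

Lemma graph_sym x y : G x y = G y x.
Proof. by case/andP: G_simple => _ /forallP /(_ x) /forallP /(_ y) /eqP. Qed.

Definition homogeneous (b : bool) (A : {set 'I_n}) :=
  [forall x in A, forall y in A, (x != y) ==> (G x y == b)].

Lemma homogeneousP b A :
  reflect {in A &, forall x y, x != y -> G x y = b} (homogeneous b A).
Proof.
apply: (iffP forall_inP) => [H x y xA yA xy|H x xA].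
  by move: (H x xA) => /forall_inP /(_ y yA) /implyP /(_ xy) /eqP.
by apply/forall_inP => y yA; apply/implyP => xy; apply/eqP; apply: H.
Qed.

Lemma homogeneous1 b x : homogeneous b [set x].
Proof. by apply/homogeneousP => y z /set1P-> /set1P->; rewrite eqxx. Qed.

Lemma homogeneousU1 b v B : homogeneous b B ->
  (forall y, y \in B -> G v y = b) -> homogeneous b (v |: B).
Proof.
move=> /homogeneousP HB Hv; apply/homogeneousP => x y /setU1P[->|xB] /setU1P[->|yB].
- by rewrite eqxx.
- by move=> _; apply: Hv.
- by move=> _; rewrite graph_sym; apply: Hv.
- exact: HB.
Qed.

Lemma homogeneous_card_leq_clique B :
  homogeneous true B -> #|B| <= clique_number G.
Proof.
move=> /homogeneousP HB; apply: (@leq_bigmax_cond _ (is_clique G) (fun A => #|A|)).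
by apply/forall_inP => x xB; apply/forall_inP => y yB; apply/implyP; apply: HB.
Qed.

Lemma clique_number_gt0 x : 0 < clique_number G.
Proof. by have := homogeneous_card_leq_clique (homogeneous1 true x); rewrite cards1. Qed.

Lemma erdos_szekeres b s t A :
  (forall B, B \subset A -> homogeneous b B -> #|B| <= s) ->
  (forall B, B \subset A -> homogeneous (~~ b) B -> #|B| <= t) ->
  #|A| < 'C(s + t, s).
Proof.
have no_homogeneous_set0 b' A' :
    (forall B, B \subset A' -> homogeneous b' B -> #|B| <= 0) -> A' = set0.
  move=> H0; apply/setP => x; rewrite inE; apply/negbTE/negP => xA.
  by have := H0 _ _ (homogeneous1 b' x); rewrite sub1set cards1 => /(_ xA).
elim: s t A => [|s IHs] t A Hb Hnb.
  by rewrite (no_homogeneous_set0 _ _ Hb) cards0 bin0.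
elim: t A Hb Hnb => [|t IHt] A Hb Hnb.
  by rewrite (no_homogeneous_set0 _ _ Hnb) cards0 bin_gt0 leq_addr.
have [->|[v vA]] := set_0Vmem A; first by rewrite cards0 bin_gt0 leq_addr.
pose N b' := [set y in A | (y != v) && (G v y == b')].
have N_sub b' : N b' \subset A by apply/subsetP => y; rewrite inE => /andP[].
have extend b' B : B \subset N b' -> homogeneous b' B ->
    [/\ v |: B \subset A, homogeneous b' (v |: B) & #|v |: B| = #|B|.+1].
  move=> /subsetP sB hB; split.
  - by rewrite subUset sub1set vA; apply/subsetP => y /sB; rewrite inE => /andP[].
  - by apply: homogeneousU1 => // y /sB; rewrite inE => /and3P[_ _ /eqP].
  - by rewrite cardsU1; case: (boolP (v \in B)) => // /sB; rewrite inE eqxx andbF.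
have cardN : #|N b| < 'C(s + t.+1, s).
  apply: IHs => B sB hB; last exact: Hnb _ (subset_trans sB (N_sub b)) hB.
  by have [sA hA cardB] := extend b B sB hB; have := Hb _ sA hA; rewrite cardB.
have cardNc : #|N (~~ b)| < 'C(s.+1 + t, s.+1).
  apply: IHt => B sB hB; first exact: Hb _ (subset_trans sB (N_sub _)) hB.
  by have [sA hA cardB] := extend _ B sB hB; have := Hnb _ sA hA; rewrite cardB.
have cover : A \subset v |: (N b :|: N (~~ b)).
  by apply/subsetP => y yA; rewrite !inE yA; case: eqP; case: (G v y); case: (b).
have cardA : #|A| <= (#|N b| + #|N (~~ b)|).+1.
  apply: leq_trans (subset_leq_card cover) _.
  by rewrite cardsU1 -add1n leq_add ?leq_b1 ?leq_card_setU.
by rewrite addnS binS; rewrite -addSnnS in cardN; lia.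
Qed.

Lemma ramsey_homogeneous s t r A : ramsey_prop s t r -> r <= #|A| ->
  (exists B, [/\ B \subset A, homogeneous true B & #|B| = s]) \/
  (exists B, [/\ B \subset A, homogeneous false B & #|B| = t]).
Proof.
move=> HR rA; pose h (i : 'I_r) : 'I_n := enum_val (widen_ord rA i).
have h_inj : injective h by move=> i j /enum_val_inj /(congr1 val) /= /val_inj.
have hA (B : {set 'I_r}) : h @: B \subset A.
  by apply/subsetP => _ /imsetP[i _ ->]; apply: enum_valP.
pose c := [ffun i => [ffun j => G (h i) (h j)]].
have c_sym i j : c i j = c j i by rewrite !ffunE graph_sym.
have hom_image b (B : {set 'I_r}) :
    {in B &, forall i j, i != j -> c i j = b} -> homogeneous b (h @: B).
  move=> HB; apply/homogeneousP => _ _ /imsetP[i iB ->] /imsetP[j jB ->] hij.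
  have ij : i != j by apply: contraNneq hij => ->.
  by have := HB i j iB jB ij; rewrite !ffunE.
case: (HR c c_sym) => [[B [cardB HB]]|[B [cardB HB]]]; [left|right];
  exists (h @: B); rewrite card_imset // hA; split => //; apply: hom_image => i j iB jB ij.
- exact: HB.
- exact/negbTE/HB.
Qed.

Definition indep_above m t := forall A, m <= #|A| ->
  exists I, [/\ I \subset A, homogeneous false I & t <= #|I|].

Lemma indep_aboveW m m' t : indep_above m t -> m <= m' -> indep_above m' t.
Proof. by move=> Hm mm' A /(leq_trans mm'); apply: Hm. Qed.

Lemma indep_above_binomial t :
  indep_above 'C(clique_number G + t, clique_number G) t.+1.
Proof.
move=> A cardA.
case: (boolP [exists I : {set 'I_n}, [&& I \subset A, homogeneous false I & t < #|I|]]).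
  by move=> /existsP[I /and3P[]]; exists I.
move=> /existsPn noI; suff: #|A| < 'C(clique_number G + t, clique_number G).
  by rewrite ltnNge cardA.
apply: (erdos_szekeres (b := true)) => B sB hB; first exact: homogeneous_card_leq_clique.
by have := noI B; rewrite sB hB /= -leqNgt.
Qed.

Lemma indep_above_ramsey t r :
  ramsey_prop (clique_number G).+1 t r -> indep_above r t.
Proof.
move=> HR A cardA; case: (ramsey_homogeneous HR cardA) => [[B [_ hB cardB]]|[B [sB hB cardB]]].
  by have := homogeneous_card_leq_clique hB; rewrite cardB ltnn.
by exists B; rewrite cardB.
Qed.

Lemma greedy_coloring m t : 0 < t -> indep_above m t -> forall A,
  exists c : 'I_n -> nat, {in A, forall x, c x < m + #|A| %/ t} /\
                          {in A &, forall x y, G x y -> c x != c y}.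
Proof.
move=> t_gt0 Hm A; have [N] := ubnP #|A|; elim: N A => // N IHN A /ltnSE cardA.
have [small|large] := ltnP #|A| m.
  exists (index^~ (enum A)); split => [x xA|x y xA yA Gxy].
    rewrite (leq_trans _ (leq_trans (ltnW small) (leq_addr _ _))) //.
    by rewrite cardE index_mem mem_enum.
  apply: contraTneq Gxy => /(congr1 (nth x (enum A))).
  by rewrite !nth_index ?mem_enum // => ->; rewrite graph_irrefl.
have [I [sI /homogeneousP indI cardI]] := Hm A large.
have cardAI : #|A :\: I| + #|I| = #|A|.
  by rewrite cardsD (setIidPr sI) subnK // subset_leq_card.
have [c [c_lt c_proper]] := IHN (A :\: I) ltac:(lia).
have div_lt : #|A :\: I| %/ t < #|A| %/ t.
  have : (#|A :\: I| + t) %/ t <= #|A| %/ t by apply: leq_div2r; lia.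
  by rewrite divnDr ?dvdnn // divnn t_gt0 addn1.
exists (fun x => if x \in I then m + #|A :\: I| %/ t else c x); split => [x xA|x y xA yA Gxy].
  case: ifP => xI; first by rewrite ltn_add2l.
  by have := c_lt x; rewrite inE xI xA => /(_ isT); lia.
have in_diff z : z \in A -> z \notin I -> z \in A :\: I by move=> zA zI; rewrite inE zI zA.
case: ifP => xI; case: ifP => yI.
- have xy : x != y by apply: contraTneq Gxy => ->; rewrite graph_irrefl.
  by move: Gxy; rewrite (indI x y).
- by have := c_lt y (in_diff _ yA (negbT yI)); lia.
- by have := c_lt x (in_diff _ xA (negbT xI)); lia.
- exact: c_proper (in_diff _ xA (negbT xI)) (in_diff _ yA (negbT yI)) Gxy.
Qed.

Lemma chromatic_number_leq_greedy m t : 0 < t -> indep_above m t ->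
  chromatic_number G <= m + n %/ t.
Proof.
move=> t_gt0 Hm; have [c [c_lt c_proper]] := greedy_coloring t_gt0 Hm [set: 'I_n].
rewrite cardsT card_ord in c_lt.
have c_lt' x : c x < m + n %/ t by apply: c_lt (in_setT x).
apply: (@chromatic_number_leq _ _ _ [ffun x => Ordinal (c_lt' x)]).
apply/forallP => x; apply/forallP => y; apply/implyP => Gxy; rewrite !ffunE.
by apply: contra_neq (c_proper x y (in_setT x) (in_setT y) Gxy) => -[].
Qed.

End Homogeneous.

(* Imported only now: classical_sets shadows finset names used above, e.g. set0. *)
From mathcomp Require Import all_classical all_reals all_analysis.
From mathcomp Require Import ring lra.
Import Order.TTheory GRing.Theory Num.Theory.
Local Open Scope ring_scope.

(** * Asymptotic facts on the reals *)

Section RealFacts.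
Variable R : realType.

Lemma expR_dominates_sqr (al C D : R) : 0 < al -> 0 <= C ->
  exists X, forall x, X <= x -> C * x ^+ 2 + D <= expR (al * x).
Proof.
move=> al_gt0 C_ge0; have al3_gt0 : 0 < al ^+ 3 by rewrite exprn_gt0.
set B := 6 * (C + `|D|); have B_ge0 : 0 <= B by rewrite /B; have := normr_ge0 D; lra.
set q := B / al ^+ 3; have q_ge0 : 0 <= q by rewrite divr_ge0 // ltW.
have alq : al ^+ 3 * q = B by rewrite /q mulrC divfK // gt_eqF.
exists (1 + q) => x Xx; have x_ge1 : 1 <= x by lra.
have Bx : B <= al ^+ 3 * x by rewrite -alq ler_wpM2l ?ltW //; lra.
have cube : 6 * (C * x ^+ 2 + D) <= (al * x) ^+ 3.
  rewrite exprMn [x ^+ 3]exprS mulrA.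
  have : B * x ^+ 2 <= al ^+ 3 * x * x ^+ 2 by rewrite ler_wpM2r // sqr_ge0.
  have : `|D| <= `|D| * x ^+ 2 by rewrite ler_peMr // expr_ge1 //; lra.
  have := ler_norm D; rewrite /B; lra.
apply: le_trans (expR_ge1Dxn 2 _); last by rewrite mulr_ge0 //; lra.
rewrite (_ : (3`!)%:R = 6 :> R) //; lra.
Qed.

Lemma ln_natr_ge_eventually (X : R) : exists N, forall n, (N <= n)%N -> X <= ln n%:R.
Proof.
exists (Num.truncn (expR X)).+1 => n Nn.
have Xn : expR X < n%:R by rewrite (lt_le_trans (truncnS_gt _)) // ler_nat.
by rewrite -ler_expR lnK ?posrE ?ltW // (lt_trans (expR_gt0 X)).
Qed.

Lemma natr_le_expR_of_log2 (m : nat) (z : R) : log2 m%:R <= z / ln 2 -> m%:R <= expR z.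
Proof.
have [->|m_gt0] := posnP m; first by rewrite expR_ge0.
rewrite /log2 ler_pM2r ?invr_gt0 ?ln_gt0 ?ltr1n // => lnm.
by rewrite -ler_expR lnK ?posrE ?ltr0n in lnm.
Qed.

Lemma limn_esup_le_eventually (u : nat -> R) b N :
  (forall n, (N <= n)%N -> u n <= b) -> (limn_esup (fun n => (u n)%:E) <= b%:E)%E.
Proof.
move=> ub; rewrite /limn_esup limf_esupE.
apply: (@le_trans _ _ (ereal_sup ((fun n => (u n)%:E) @` [set n | (N <= n)%N]%classic))).
  by apply: ereal_inf_lbound; exists [set n | (N <= n)%N]%classic => //; exists N.
by apply: ge_ereal_sup => _ [n Nn <-]; rewrite lee_fin; apply: ub.
Qed.

Lemma limn_esup_lt_eventually (u : (\bar R)^nat) c :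
  (limn_esup u < c -> exists N, forall n, (N <= n)%N -> u n < c)%E.
Proof.
rewrite /limn_esup limf_esupE => /ereal_inf_lt[_ [V [N _ NV] <-] Vc].
by exists N => n Nn; apply: le_lt_trans Vc; apply: ereal_sup_ubound; exists n => //; apply: NV.
Qed.

End RealFacts.

(** * Chromatic number of large graphs *)

Definition log2_ramsey_le (R : realType) (Ram : nat -> nat -> nat) (T0 : nat) (c : R) :=
  forall s t, (0 < s)%N -> (s <= t)%N -> (T0 <= t)%N ->
    log2 (Ram s t)%:R <= c * Num.sqrt (s * t)%:R.

Section ColoringBound.
Variables (R : realType) (Ram : nat -> nat -> nat).
Hypothesis HRam : forall s t, (0 < s)%N -> (0 < t)%N -> is_ramsey_number s t (Ram s t).
Variables (a eta : R) (T0 : nat).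
Hypotheses (a_gt0 : 0 < a) (eta_gt0 : 0 < eta) (eta_le : 12 * eta <= 1).
Hypothesis Ram_le : log2_ramsey_le Ram T0 a.

Lemma ramsey_prop_log2_le s t : (0 < s)%N -> (0 < t)%N -> (T0 <= maxn s t)%N ->
  exists2 r, ramsey_prop s t r & log2 (r%:R : R) <= a * Num.sqrt (s * t)%:R.
Proof.
move=> s_gt0 t_gt0 T0st; have [st|ts] := leqP s t.
  exists (Ram s t); first by case: (HRam s_gt0 t_gt0).
  by apply: Ram_le => //; rewrite -(maxn_idPr st).
exists (Ram t s); first by apply: ramsey_prop_sym; case: (HRam t_gt0 s_gt0).
by rewrite mulnC; apply: Ram_le => //; [exact: ltnW | rewrite -(maxn_idPl (ltnW ts))].
Qed.

Let theta := 1 - eta / 2.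
Let K := maxn T0 (Num.truncn eta^-1).+1.

Let theta_sqr : 1 - eta <= theta ^+ 2.
Proof. by rewrite /theta; nra. Qed.

Let K_gt0 : (0 < K)%N. Proof. by rewrite leq_max orbT. Qed.

Let eta_K_ge1 : 1 <= eta * K%:R.
Proof.
rewrite -ler_pdivrMl // mulr1; apply: ltW; apply: lt_le_trans (truncnS_gt _) _.
by rewrite ler_nat leq_maxr.
Qed.

Section LargeOrder.
Variable n : nat.
Hypothesis n_gt1 : (1 < n)%N.
Let x := ln (n%:R : R).
Let u := log2 (n%:R : R).
Let W := n%:R / u ^+ 2.
Hypothesis budget_large : u ^+ 2 * expR (theta * x) <= 6 * eta * a ^+ 2 * n%:R.
Hypothesis indep_large : u ^+ 2 / a ^+ 2 + 1 <= expR (theta / K%:R * x).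

Let n_gt0 : 0 < n%:R :> R. Proof. by rewrite ltr0n ltnW. Qed.
Let u_gt0 : 0 < u. Proof. by rewrite divr_gt0 ?ln_gt0 ?ltr1n. Qed.
Let W_gt0 : 0 < W. Proof. by rewrite divr_gt0 ?exprn_gt0. Qed.
Let n_eq : n%:R = u ^+ 2 * W. Proof. by rewrite /W mulrC divfK // gt_eqF ?exprn_gt0. Qed.

Let expR_budget y : 0 <= y -> y <= expR (theta / K%:R * x) -> y ^+ K <= expR (theta * x).
Proof.
move=> y_ge0 y_le; apply: le_trans (lerXn2r K _ _ y_le) _; rewrite ?nnegrE ?expR_ge0 //.
by rewrite -expRM_natl mulrA mulrCA divff ?mulr1 // pnatr_eq0 -lt0n.
Qed.

Section OneGraph.
Variable G : graph n.
Hypothesis G_simple : simple_graph G.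
Let k := clique_number G.

Let k_ge1 : 1 <= k%:R :> R.
Proof. by rewrite ler1n; apply: clique_number_gt0 (Ordinal (ltnW n_gt1)). Qed.

Lemma chromatic_le_of_indep_above m t : (0 < t)%N -> indep_above G m t ->
  m%:R <= expR (theta * x) -> u ^+ 2 <= k%:R * (a ^+ 2 * (1 + 6 * eta)) * t%:R ->
  (chromatic_number G)%:R <= k%:R * (a ^+ 2 * (1 + 12 * eta) * W).
Proof.
move=> t_gt0 Hm m_le u_le; have t_gt0' : 0 < t%:R :> R by rewrite ltr0n.
have chi_le : (chromatic_number G)%:R <= m%:R + n%:R / t%:R :> R.
  apply: le_trans (_ : (m + n %/ t)%:R <= _).
    by rewrite ler_nat chromatic_number_leq_greedy.
  by rewrite natrD lerD2l ler_pdivlMr // -natrM ler_nat leq_divM.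
have m_le' : m%:R <= 6 * eta * a ^+ 2 * W.
  apply: le_trans m_le _; rewrite -(ler_pM2l (exprn_gt0 2 u_gt0)).
  by rewrite mulrCA -n_eq.
have nt_le : n%:R / t%:R <= k%:R * (a ^+ 2 * (1 + 6 * eta)) * W.
  by rewrite n_eq ler_pdivrMr // [X in _ <= X]mulrAC ler_pM2r.
have : 6 * eta * a ^+ 2 * W <= k%:R * (6 * eta * a ^+ 2 * W).
  by apply: ler_peMl => //; rewrite ltW // mulr_gt0 // mulr_gt0 ?exprn_gt0 // mulr_gt0.
lra.
Qed.

Lemma chromatic_le_huge_clique : u ^+ 2 <= a ^+ 2 * k%:R ->
  (chromatic_number G)%:R <= k%:R * (a ^+ 2 * (1 + 12 * eta) * W).
Proof.
move=> u_le; apply: le_trans (_ : n%:R <= _); first by rewrite ler_nat chromatic_number_leq_n.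
have := ler_wpM2r (ltW W_gt0) u_le.
have := mulr_ge0 (mulr_ge0 (ler0n R k) (sqr_ge0 a)) (mulr_ge0 (ltW eta_gt0) (ltW W_gt0)).
rewrite n_eq; lra.
Qed.

Lemma chromatic_le_large_clique : eta * u ^+ 2 < a ^+ 2 * k%:R -> a ^+ 2 * k%:R < u ^+ 2 ->
  (chromatic_number G)%:R <= k%:R * (a ^+ 2 * (1 + 12 * eta) * W).
Proof.
move=> k_gt k_lt; apply: (@chromatic_le_of_indep_above (k.+1 ^ K) K.+1) => //.
- apply: indep_aboveW (indep_above_binomial (t := K) G_simple) _.
  by rewrite -bin_sub ?leq_addr // addKn addnC bin_leq_expn.
- rewrite natrX expR_budget // -natr1 (le_trans _ indep_large) // lerD2r.
  by rewrite ler_pdivlMr ?exprn_gt0 // mulrC ltW.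
- have : u ^+ 2 <= eta * u ^+ 2 * K%:R by rewrite -mulrA mulrCA ler_peMr ?sqr_ge0.
  have := ler_wpM2r (ler0n R K) (ltW k_gt).
  have : 0 <= a ^+ 2 * k%:R * (6 * eta * K%:R + 1 + 6 * eta).
    by rewrite mulr_ge0 ?mulr_ge0 ?addr_ge0 ?mulr_ge0 ?sqr_ge0 ?ler0n ?divr_ge0 // ltW.
  rewrite -natr1; lra.
Qed.

Lemma chromatic_le_small_clique : (k < K)%N ->
  (chromatic_number G)%:R <= k%:R * (a ^+ 2 * (1 + 12 * eta) * W).
Proof.
move=> k_lt; have /andP[] := truncn_itv (expR_ge0 (theta / K%:R * x)).
move: (Num.truncn _) => t ty yt.
have ut : u ^+ 2 <= a ^+ 2 * t%:R.
  by rewrite -ler_pdivrMl ?exprn_gt0 // mulrC; move: indep_large yt; rewrite -natr1; lra.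
have t_gt0 : (0 < t)%N.
  by rewrite -(ltr0n R) -(pmulr_rgt0 _ (exprn_gt0 2 a_gt0)) (lt_le_trans _ ut) ?exprn_gt0.
apply: (@chromatic_le_of_indep_above (t ^ k) t) => //.
- rewrite -{2}(prednK t_gt0).
  apply: indep_aboveW (indep_above_binomial (t := t.-1) G_simple) _.
  by have := bin_leq_expn k t.-1; rewrite prednK.
- rewrite natrX (le_trans _ (expR_budget (ler0n R t) ty)) //.
  by apply: ler_weXn2l; [rewrite ler1n | exact: ltnW].
- have := mulr_ge0 (mulr_ge0 (ler0n R k) (mulr_ge0 (sqr_ge0 a) (ltW eta_gt0))) (ler0n R t).
  have := ler_wpM2r (mulr_ge0 (sqr_ge0 a) (ler0n R t)) k_ge1.
  lra.
Qed.

Section ModerateClique.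
Hypotheses (K_le_k : (K <= k)%N) (k_le : a ^+ 2 * k%:R <= eta * u ^+ 2).
Variable t : nat.
Hypothesis t_floor : t%:R <= theta ^+ 2 * u ^+ 2 / (a ^+ 2 * (k%:R + 1)) < t.+1%:R.

Let D_gt0 : 0 < a ^+ 2 * (k%:R + 1).
Proof. by rewrite mulr_gt0 ?exprn_gt0 // ltr_pwDr. Qed.

Let t_le : a ^+ 2 * (k%:R + 1) * t%:R <= theta ^+ 2 * u ^+ 2.
Proof. by case/andP: t_floor; rewrite ler_pdivlMr // mulrC. Qed.

Let t_gt : theta ^+ 2 * u ^+ 2 < a ^+ 2 * (k%:R + 1) * (t%:R + 1).
Proof. by case/andP: t_floor => _; rewrite ltr_pdivrMr // -natr1 [X in _ -> _ < X]mulrC. Qed.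

Let eta_k_ge1 : 1 <= eta * k%:R.
Proof. by apply: le_trans eta_K_ge1 (ler_wpM2l (ltW eta_gt0) _); rewrite ler_nat. Qed.

Let a2_le : a ^+ 2 <= eta * u ^+ 2.
Proof.
have := ler_peMr (sqr_ge0 a) eta_k_ge1; have := ler_wpM2l (ltW eta_gt0) k_le.
have : eta * (eta * u ^+ 2) <= eta * u ^+ 2.
  by apply: ler_piMl; [rewrite mulr_ge0 ?sqr_ge0 ?ltW | move: eta_le; lra].
lra.
Qed.

Lemma moderate_t_gt0 : (0 < t)%N.
Proof.
have D_le : a ^+ 2 * (k%:R + 1) <= theta ^+ 2 * u ^+ 2.
  have := ler_wpM2r (sqr_ge0 u) theta_sqr; have := ler_wpM2r (sqr_ge0 u) eta_le.
  have := sqr_ge0 u; move: k_le a2_le; lra.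
have := le_lt_trans D_le t_gt; rewrite ltr_pMr //.
by rewrite ltrDr ltr0n.
Qed.

Lemma moderate_ramsey_log2 : a * Num.sqrt (k.+1 * t)%:R <= theta * u.
Proof.
have lhs_ge0 : 0 <= a * Num.sqrt (k.+1 * t)%:R by rewrite mulr_ge0 ?sqrtr_ge0 // ltW.
have rhs_ge0 : 0 <= theta * u by rewrite mulr_ge0 ?ltW //= /theta; move: eta_le; lra.
rewrite -(ler_pXn2r (_ : 0 < 2)%N) ?nnegrE // 2!exprMn sqr_sqrtr //.
by rewrite natrM -natr1 mulrA.
Qed.

Lemma moderate_t_large : u ^+ 2 <= k%:R * (a ^+ 2 * (1 + 6 * eta)) * t%:R.
Proof.
have theta_sqr_le1 : theta ^+ 2 <= 1 by rewrite /theta; move: eta_gt0 eta_le; nra.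
have Dt_le : a ^+ 2 * (k%:R + 1) * t%:R <= u ^+ 2.
  by apply: le_trans t_le _; rewrite ler_piMl ?sqr_ge0.
have at_le : a ^+ 2 * t%:R <= eta * u ^+ 2.
  have := ler_peMr (mulr_ge0 (sqr_ge0 a) (ler0n R t)) eta_k_ge1.
  have := ler_wpM2l (ltW eta_gt0) Dt_le.
  have := mulr_ge0 (ltW eta_gt0) (mulr_ge0 (sqr_ge0 a) (ler0n R t)).
  lra.
have main : (1 - 4 * eta) * u ^+ 2 <= a ^+ 2 * k%:R * t%:R.
  have := ler_wpM2r (sqr_ge0 u) theta_sqr; move: t_gt k_le a2_le; lra.
have := ler_wpM2l (_ : 0 <= 1 + 6 * eta) main.
have := mulr_ge0 (mulr_ge0 (ltW eta_gt0) (sqr_ge0 u)) (_ : 0 <= 2 - 24 * eta).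
move: eta_gt0 eta_le; nra.
Qed.

End ModerateClique.

Lemma chromatic_le_moderate_clique : (K <= k)%N -> a ^+ 2 * k%:R <= eta * u ^+ 2 ->
  (chromatic_number G)%:R <= k%:R * (a ^+ 2 * (1 + 12 * eta) * W).
Proof.
move=> K_le_k k_le; set y := theta ^+ 2 * u ^+ 2 / (a ^+ 2 * (k%:R + 1)).
have y_ge0 : 0 <= y.
  rewrite /y divr_ge0 //; first exact: mulr_ge0 (sqr_ge0 _) (sqr_ge0 _).
  exact: mulr_ge0 (sqr_ge0 _) (addr_ge0 (ler0n R k) ler01).
have := truncn_itv y_ge0; move: (Num.truncn y) => t t_floor.
have t_gt0 := moderate_t_gt0 K_le_k k_le t_floor.
have T0_le : (T0 <= maxn k.+1 t)%N.
  by rewrite leq_max (leq_trans (leq_maxl _ _) (leq_trans K_le_k (leqnSn k))).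
have [r Hr r_le] := ramsey_prop_log2_le (ltn0Sn k) t_gt0 T0_le.
apply: (@chromatic_le_of_indep_above r t t_gt0 (indep_above_ramsey G_simple Hr)).
  apply: natr_le_expR_of_log2; apply: le_trans r_le _; rewrite -mulrA.
  exact: moderate_ramsey_log2 t_floor.
exact: (moderate_t_large K_le_k k_le t_floor).
Qed.

Lemma chromatic_le_clique_number :
  (chromatic_number G)%:R <= k%:R * (a ^+ 2 * (1 + 12 * eta) * W).
Proof.
have [huge|not_huge] := lerP (u ^+ 2) (a ^+ 2 * k%:R).
  exact: chromatic_le_huge_clique.
have [large|moderate] := ltrP (eta * u ^+ 2) (a ^+ 2 * k%:R).
  exact: chromatic_le_large_clique.
have [small|K_le_k] := ltnP k K.
  exact: chromatic_le_small_clique.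
exact: chromatic_le_moderate_clique.
Qed.

End OneGraph.

Lemma g_fun_le : g_fun R n <= a ^+ 2 * (1 + 12 * eta).
Proof.
have c_ge0 : 0 <= a ^+ 2 * (1 + 12 * eta) * W.
  have : 0 <= 1 + 12 * eta by move: eta_gt0; lra.
  by move=> pos; exact: mulr_ge0 (mulr_ge0 (sqr_ge0 a) pos) (ltW W_gt0).
have f_le : f_ratio R n <= a ^+ 2 * (1 + 12 * eta) * W.
  apply: bigmax_le => // G G_simple.
  rewrite ler_pdivrMr ?ltr0n ?(clique_number_gt0 G (Ordinal (ltnW n_gt1))) // mulrC.
  exact: chromatic_le_clique_number.
rewrite /g_fun -/u; apply: le_trans (ler_wpM2l _ f_le) _.
  by rewrite divr_ge0 ?sqr_ge0 ?ler0n.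
by rewrite /W le_eqVlt; apply/orP; left; apply/eqP; field; rewrite !gt_eqF.
Qed.

End LargeOrder.

Lemma n_large_eventually : exists N, forall n, (N <= n)%N -> [/\ (1 < n)%N,
  log2 (n%:R : R) ^+ 2 * expR (theta * ln n%:R) <= 6 * eta * a ^+ 2 * n%:R &
  log2 (n%:R : R) ^+ 2 / a ^+ 2 + 1 <= expR (theta / K%:R * ln n%:R)].
Proof.
have ln2_gt0 : 0 < ln (2 : R) by rewrite ln_gt0 ?ltr1n.
have theta_lt1 : 0 < 1 - theta by rewrite /theta; move: eta_gt0; lra.
have theta_K_gt0 : 0 < theta / K%:R.
  by rewrite divr_gt0 ?ltr0n //= /theta; move: eta_le; lra.
set C1 := (6 * eta * a ^+ 2 * ln 2 ^+ 2)^-1.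
set C2 := (a ^+ 2 * ln 2 ^+ 2)^-1.
have C1_ge0 : 0 <= C1 by rewrite /C1 invr_ge0 !mulr_ge0 ?sqr_ge0 // ltW.
have C2_ge0 : 0 <= C2 by rewrite /C2 invr_ge0 mulr_ge0 ?sqr_ge0.
have [X1 HX1] := expR_dominates_sqr 0 theta_lt1 C1_ge0.
have [X2 HX2] := expR_dominates_sqr 1 theta_K_gt0 C2_ge0.
have [N HN] := ln_natr_ge_eventually (Num.max X1 X2).
exists (maxn N 2) => n; rewrite geq_max => /andP[Nn n_gt1].
have := HN n Nn; rewrite ge_max => /andP[X1x X2x].
set x := ln (n%:R : R) in X1x X2x *.
have n_eq : n%:R = expR x by rewrite lnK // posrE ltr0n ltnW.
have u_eq : log2 (n%:R : R) = x / ln 2 by [].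
split => //; rewrite u_eq.
  have := HX1 x X1x; rewrite addr0 n_eq => C1x.
  have -> : expR x = expR ((1 - theta) * x) * expR (theta * x).
    by rewrite -expRD mulrBl mul1r subrK.
  have -> : (x / ln 2) ^+ 2 = 6 * eta * a ^+ 2 * (C1 * x ^+ 2).
    by rewrite /C1; field; rewrite !gt_eqF.
  rewrite -mulrA; apply: ler_wpM2l; first by rewrite mulr_ge0 ?sqr_ge0 // mulr_ge0 // ltW.
  by rewrite ler_pM2r ?expR_gt0.
apply: le_trans (HX2 x X2x); rewrite lerD2r /C2 le_eqVlt; apply/orP; left.
by apply/eqP; field; rewrite !gt_eqF.
Qed.

Lemma g_fun_le_eventually :
  exists N, forall n, (N <= n)%N -> g_fun R n <= a ^+ 2 * (1 + 12 * eta).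
Proof.
have [N HN] := n_large_eventually.
by exists N => n /HN[n_gt1 budget indep]; apply: g_fun_le n_gt1 budget indep.
Qed.

End ColoringBound.

(** * The lim sup bound *)

Lemma sqr_approx_above (R : realType) (r e : R) : 0 <= r -> 0 < e ->
  exists a eta, [/\ r < a, 0 < eta, 12 * eta <= 1 & a ^+ 2 * (1 + 12 * eta) <= r * r + e].
Proof.
move=> r_ge0 e_gt0; set h := e / (8 * r + 8 + e).
have hE : h * (8 * r + 8 + e) = e by rewrite /h divfK // gt_eqF //; lra.
have h_gt0 : 0 < h by rewrite /h divr_gt0 //; lra.
set a := r + h; set eta := e / (12 * (2 * a ^+ 2 + 2 + e)).
have etaE : 12 * eta * (2 * a ^+ 2 + 2 + e) = e.
  by rewrite /eta; field; rewrite gt_eqF //; have := sqr_ge0 a; lra.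
have eta_gt0 : 0 < eta by rewrite /eta divr_gt0 // mulr_gt0 //; have := sqr_ge0 a; lra.
exists a, eta; split => //; first by rewrite /a; lra.
  by have := sqr_ge0 a; nra.
have h_le1 : h <= 1 by nra.
have : a ^+ 2 <= r * r + e / 4 by rewrite /a; nra.
have := sqr_ge0 a; nra.
Qed.

Lemma log2_ramsey_le_of_bigmax (R : realType) (Ram : nat -> nat -> nat) (c : R) s t :
  (0 < s)%N -> (s <= t)%N ->
  \big[Num.max/0]_(1 <= s' < t.+1) (log2 (Ram s' t)%:R / Num.sqrt (s' * t)%:R) <= c ->
  log2 (Ram s t)%:R <= c * Num.sqrt (s * t)%:R.
Proof.
move=> s_gt0 st max_le.
have sqrt_gt0 : 0 < Num.sqrt (s * t)%:R :> R.
  by rewrite sqrtr_gt0 ltr0n muln_gt0 s_gt0 (leq_trans s_gt0 st).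
rewrite -ler_pdivrMr //; apply: le_trans max_le.
apply: (@le_bigmax_seq _ _ _ (index_iota 1 t.+1) 0 s xpredT
  (fun s' => log2 (Ram s' t)%:R / Num.sqrt (s' * t)%:R)) => //.
by rewrite mem_index_iota s_gt0 ltnS.
Qed.

Lemma limn_esup_g_le_sqr (R : realType) (Ram : nat -> nat -> nat)
  (HRam : forall s t, (0 < s)%N -> (0 < t)%N -> is_ramsey_number s t (Ram s t))
  (M : \bar R) : (0 <= M)%E ->
  (forall c : R, (M < c%:E)%E -> exists T0, log2_ramsey_le Ram T0 c) ->
  (limn_esup (fun n => (g_fun R n)%:E) <= M * M)%E.
Proof.
case: M => [r r_ge0 M_bound | _ _ | //]; last by rewrite mulyy leey.
rewrite lee_fin in r_ge0; rewrite -EFinM; apply/lee_addgt0Pr => e e_gt0.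
have [a [eta [ra eta_gt0 eta_le close]]] := sqr_approx_above r_ge0 e_gt0.
have [T0 HT0] := M_bound a ra.
have [N HN] := g_fun_le_eventually HRam (le_lt_trans r_ge0 ra) eta_gt0 eta_le HT0.
by apply: le_trans (limn_esup_le_eventually HN) _; rewrite -EFinD lee_fin.
Qed.

Theorem theorem2p2 (R : realType) (Ram : nat -> nat -> nat)
  (HRam : forall s t, (0 < s)%N -> (0 < t)%N -> is_ramsey_number s t (Ram s t)) :
  let M : \bar R :=
    limn_esup (fun t : nat =>
      (\big[Num.max/0]_(1 <= s < t.+1)
         (log2 ((Ram s t)%:R : R) / Num.sqrt ((s * t)%:R)))%R%:E) in
  (limn_esup (fun n : nat => (g_fun R n)%:E) <= M * M)%E.
Proof.
apply: (@limn_esup_g_le_sqr R Ram HRam).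
  apply: limf_esup_ge0 => [[N _ /(_ N (leqnn N))] //|t].
  by rewrite lee_fin; exact: bigmax_ge_id.
move=> c /limn_esup_lt_eventually[T0 HT0]; exists T0 => s t s_gt0 st T0t.
by apply: log2_ramsey_le_of_bigmax s_gt0 st _; rewrite -lee_fin ltW // HT0.
Qed.
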